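(* Let $p_0,p_1:\Omega\to\mathbb{R}$ be $c$-concave functions and let $U=\{x\in\Omega:p_0(x)<p_1(x)\}$. For $y\in\Omega$ at which the maps $T_{p_0},T_{p_1}$ are defined, if $T_{p_1}(y)\in U$ then $T_{p_0}(y)\in U$.
   Context: $\Omega\subset\mathbb{R}^d$ bounded smooth domain; $c:\mathbb{R}^d\times\mathbb{R}^d\to[0,\infty)$ is symmetric, $c(x,x)=0$, $C^1_{loc}$, and for all $x_0$ the map $y\mapsto\nabla_xc(x_0,y)$ is injective. For $p:\Omega\to\mathbb{R}$, $p^c(y)=\inf_{x\in\Omega}p(x)+c(x,y)$; for $q$, $q^{\bar c}(x)=\sup_{y\in\Omega}q(y)-c(x,y)$; $p$ is $c$-concave if $p^{c\bar c}=p$. For $c$-concave $p$, $T_p(y)=\operatorname{argmin}_{x\in\Omega}\,p(x)+c(x,y)$, which is uniquely defined for a.e. $y$. *)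

(* R^d is modelled as 'rV[R]_d for R : realType. *)
From mathcomp Require Import all_boot all_order all_algebra.
From mathcomp Require Import all_classical all_reals all_analysis.
Import numFieldNormedType.Exports.
Set Implicit Arguments. Unset Strict Implicit. Unset Printing Implicit Defensive.
Import Order.TTheory GRing.Theory Num.Theory.
Local Open Scope classical_set_scope.
Local Open Scope ring_scope.

Section Defs.
Context {R : realType} {d : nat}.
Local Notation V := 'rV[R]_d.

Fixpoint iter_deriv (vs : seq V) (f : V -> R^o) : V -> R^o :=
  match vs with
  | [::] => f
  | v :: vs' => fun x => 'D_v (iter_deriv vs' f) x
  end.

Definition smooth_fun (f : V -> R^o) : Prop :=
  forall vs : seq V, forall x : V, differentiable (iter_deriv vs f) x.

(* Bounded smooth domain: open, connected, bounded, with a smooth global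
   defining function rho (Omega = {rho < 0}) whose gradient does not vanish
   on the boundary. *)
Definition bounded_smooth_domain (Om : set V) : Prop :=
  open Om /\ connected Om /\ [bounded x | x in Om] /\
  exists rho : V -> R^o, smooth_fun rho /\
    Om = [set x | rho x < 0] /\
    (forall x, x \in [set x | rho x = 0] -> exists v : V, 'D_v rho x != 0).

Definition C1_cost (c : V -> V -> R) : Prop :=
  let F := (fun z : V * V => (c z.1 z.2 : R^o)) in
  (forall z w : V * V, derivable F z w) /\
  (forall w : V * V, continuous (fun z => 'D_w F z)).

Definition admissible_cost (c : V -> V -> R) : Prop :=
  (forall x y, 0 <= c x y) /\
  (forall x y, c x y = c y x) /\
  (forall x, c x x = 0) /\
  C1_cost c /\
  (forall x0 y1 y2 : V,
     (forall v : V, 'D_v (fun x => (c x y1 : R^o)) x0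
                    = 'D_v (fun x => (c x y2 : R^o)) x0) -> y1 = y2).

Definition c_transform (c : V -> V -> R) (Om : set V) (p : V -> R) (y : V)
  : \bar R := ereal_inf [set ((p x + c x y)%:E) | x in Om].

Definition cbar_transform (c : V -> V -> R) (Om : set V) (q : V -> \bar R)
  (x : V) : \bar R := ereal_sup [set (q y - (c x y)%:E)%E | y in Om].

Definition c_concave (c : V -> V -> R) (Om : set V) (p : V -> R) : Prop :=
  forall x, Om x -> cbar_transform c Om (c_transform c Om p) x = (p x)%:E.

(* T_p(y) is defined and equals x: x is the unique argmin over Omega
   of x' |-> p x' + c x' y *)
Definition T_map_is (c : V -> V -> R) (Om : set V) (p : V -> R) (y x : V)
  : Prop :=
  Om x /\ (forall x', Om x' -> p x + c x y <= p x' + c x' y) /\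
  (forall x', Om x' -> (forall x'', Om x'' -> p x' + c x' y <= p x'' + c x'' y)
     -> x' = x).

End Defs.

From mathcomp Require Import all_boot all_order all_algebra.
From mathcomp Require Import all_classical all_reals all_analysis.
From mathcomp Require Import lra.
Import Order.TTheory GRing.Theory Num.Theory.
Local Open Scope classical_set_scope.
Local Open Scope ring_scope.

(* If p1 <= p0 held at x0 = T_p0(y), the minimality of x1 = T_p1(y) and of x0
   would give p1 x1 + c x1 y <= p1 x0 + c x0 y <= p0 x0 + c x0 y
   <= p0 x1 + c x1 y < p1 x1 + c x1 y. *)

Lemma argmin_lt_perturbation (T : Type) (R : realDomainType) (A : set T)
    (f0 f1 g : T -> R) (x0 x1 : T) :
  A x0 -> A x1 ->
  (forall x, A x -> f0 x0 + g x0 <= f0 x + g x) ->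
  (forall x, A x -> f1 x1 + g x1 <= f1 x + g x) ->
  f0 x1 < f1 x1 -> f0 x0 < f1 x0.
Proof.
move=> A_x0 A_x1 min0 min1 lt_x1.
have := min0 x1 A_x1; have := min1 x0 A_x0.
rewrite ltNge => le_x1_x0 le_x0_x1; apply/negP => le_x0.
lra.
Qed.

Theorem lemma4p1 (R : realType) (d : nat) (Om : set 'rV[R]_d)
  (c : 'rV[R]_d -> 'rV[R]_d -> R) (p0 p1 : 'rV[R]_d -> R) :
  bounded_smooth_domain Om -> admissible_cost c ->
  c_concave c Om p0 -> c_concave c Om p1 ->
  let U := [set x | Om x /\ p0 x < p1 x] in
  forall y x0 x1 : 'rV[R]_d, Om y ->
    T_map_is c Om p0 y x0 -> T_map_is c Om p1 y x1 ->
    U x1 -> U x0.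
Proof.
move=> _ _ _ _ U y x0 x1 _ [Om_x0 [min0 _]] [Om_x1 [min1 _]] [_ lt_x1].
split=> //.
exact: (@argmin_lt_perturbation _ _ Om p0 p1 (c^~ y) x0 x1
         Om_x0 Om_x1 min0 min1 lt_x1).
Qed.
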